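(* Let $\mathcal L$ be a linearly ordered non-discrete MV-algebra and let $0<p<q<1$ in $L$. Then $$\,]q,1]\sqsubseteq\!\!\to\,]p,1]=[q\to p,1].$$
   Context: $\mathcal L=(L,\oplus,\lnot,0)$ is a linearly ordered MV-algebra. We write $1=\lnot 0$ and $x\to y=\lnot x\oplus y$. Non-discrete means no element has an immediate successor or an immediate predecessor. We write $[p,1]=\{x: x\ge p\}$ and $]p,1]=\{x:x>p\}$. For an upward-closed $\mathcal F$ and $a\in L$, let $\mathcal F_a=\{z:z\to a\notin\mathcal F\}$. For upward-closed $\mathcal F\subseteq\mathcal G$ we put $\mathcal F\sqsubseteq\!\!\to\mathcal G=\bigcap_{a\in L\setminus\mathcal G}\mathcal F_a$. *)

Set Implicit Arguments.

(* MV-algebras (Chang / Mundici axiomatization). *)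
Record MVAlgebra := MkMV {
  mv_car :> Type;
  mv_oplus : mv_car -> mv_car -> mv_car;
  mv_neg : mv_car -> mv_car;
  mv_zero : mv_car;
  mv_assoc : forall x y z, mv_oplus x (mv_oplus y z) = mv_oplus (mv_oplus x y) z;
  mv_comm : forall x y, mv_oplus x y = mv_oplus y x;
  mv_zero_r : forall x, mv_oplus x mv_zero = x;
  mv_negK : forall x, mv_neg (mv_neg x) = x;
  mv_one_abs : forall x, mv_oplus x (mv_neg mv_zero) = mv_neg mv_zero;
  mv_luk : forall x y,
    mv_oplus (mv_neg (mv_oplus (mv_neg x) y)) y =
    mv_oplus (mv_neg (mv_oplus (mv_neg y) x)) x
}.

Section MVDefs.
Variable A : MVAlgebra.

Definition mv_one : A := mv_neg A (mv_zero A).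
Definition mv_impl (x y : A) : A := mv_oplus A (mv_neg A x) y.
Definition mv_le (x y : A) : Prop := mv_impl x y = mv_one.
Definition mv_lt (x y : A) : Prop := mv_le x y /\ x <> y.

Definition linearly_ordered : Prop := forall x y : A, mv_le x y \/ mv_le y x.

Definition imm_succ (x y : A) : Prop :=
  mv_lt x y /\ forall z, ~ (mv_lt x z /\ mv_lt z y).
Definition imm_pred (x y : A) : Prop :=
  mv_lt y x /\ forall z, ~ (mv_lt y z /\ mv_lt z x).

Definition non_discrete : Prop :=
  forall x : A, (~ exists y, imm_succ x y) /\ (~ exists y, imm_pred x y).

Definition upward_closed (F : A -> Prop) : Prop :=
  forall x y, F x -> mv_le x y -> F y.

Definition closed_up (p : A) : A -> Prop := fun x => mv_le p x.
Definition open_up (p : A) : A -> Prop := fun x => mv_lt p x.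

(* F_a = { z : z -> a \notin F } *)
Definition Fsub (F : A -> Prop) (a : A) : A -> Prop :=
  fun z => ~ F (mv_impl z a).

(* F ⊑→ G = intersection over a \in L \ G of F_a *)
Definition sqimpl (F G : A -> Prop) : A -> Prop :=
  fun z => forall a : A, ~ G a -> Fsub F a z.

End MVDefs.

(* Unfolding the definitions, z lies in ]q,1] ⊑→ ]p,1] iff
   z → a ∉ ]q,1], i.e. z → a ≤ q, for every a ∉ ]p,1], i.e. every a ≤ p
   (linearity is what turns "not strictly above" into "below or equal").
   Since z → a is monotone in a, this family of conditions collapses to the
   single one at a = p:  z → p ≤ q.  Finally, for elements above p the map
   y ↦ y → p is an antitone involution, so z → p ≤ q iff q → p ≤ z; the
   case z ≤ p is excluded because then z → p = 1 ≤ q would force q = 1. *)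
From Stdlib Require Import Classical.

Set Implicit Arguments.

Section MVOrder.
Variable A : MVAlgebra.
Local Notation "x ⊕ y" := (mv_oplus A x y) (at level 50, left associativity).
Local Notation "¬ x" := (mv_neg A x) (at level 35, right associativity).
Local Notation "x ⇒ y" := (mv_impl A x y) (at level 55, right associativity).
Local Notation "x ≤ y" := (mv_le A x y) (at level 70, no associativity).
Local Notation O := (mv_zero A).
Local Notation I := (mv_one A).

Lemma neg_one : ¬ I = O.
Proof. apply mv_negK. Qed.

Lemma oplus_0l x : O ⊕ x = x.
Proof. rewrite mv_comm. apply mv_zero_r. Qed.

Lemma oplus_1l x : I ⊕ x = I.
Proof. rewrite mv_comm. apply mv_one_abs. Qed.

(* Reflexivity: ¬x ⊕ x = 1, an instance of Łukasiewicz's axiom with y = 1. *)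
Lemma le_refl x : x ≤ x.
Proof.
  pose proof (mv_luk A x I) as E.
  rewrite !mv_one_abs, neg_one, oplus_0l in E.
  symmetry. exact E.
Qed.

Lemma le_antisym x y : x ≤ y -> y ≤ x -> x = y.
Proof.
  unfold mv_le, mv_impl. intros Hxy Hyx.
  pose proof (mv_luk A x y) as E.
  rewrite Hxy, Hyx, neg_one, !oplus_0l in E. symmetry. exact E.
Qed.

Lemma le_one x : x ≤ I.
Proof. apply mv_one_abs. Qed.

Lemma le_oplus_r u w : u ≤ u ⊕ w.
Proof.
  unfold mv_le, mv_impl. rewrite mv_assoc. pose proof (le_refl u) as H.
  unfold mv_le, mv_impl in H. rewrite H. apply oplus_1l.
Qed.

Lemma le_decomp y z : y ≤ z -> z = y ⊕ ¬ (¬ z ⊕ y).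
Proof.
  unfold mv_le, mv_impl. intros H.
  pose proof (mv_luk A y z) as E. rewrite H, neg_one, oplus_0l in E.
  rewrite (mv_comm A y). exact E.
Qed.

Lemma le_trans x y z : x ≤ y -> y ≤ z -> x ≤ z.
Proof.
  intros Hxy Hyz. rewrite (le_decomp Hyz).
  unfold mv_le, mv_impl in *. rewrite mv_assoc, Hxy. apply oplus_1l.
Qed.

Lemma oplus_mono_l a b c : a ≤ b -> a ⊕ c ≤ b ⊕ c.
Proof.
  intros H. rewrite (le_decomp H).
  rewrite <- mv_assoc, (mv_comm _ (¬ _) c), mv_assoc. apply le_oplus_r.
Qed.

Lemma neg_anti x y : x ≤ y -> ¬ y ≤ ¬ x.
Proof. unfold mv_le, mv_impl. rewrite mv_negK, mv_comm. auto. Qed.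

Lemma impl_mono_r x a b : a ≤ b -> x ⇒ a ≤ x ⇒ b.
Proof. intros H. unfold mv_impl. rewrite !(mv_comm _ (¬ x)). apply oplus_mono_l, H. Qed.

Lemma impl_anti_l x y p : y ≤ x -> x ⇒ p ≤ y ⇒ p.
Proof. intros H. apply oplus_mono_l, neg_anti, H. Qed.

Lemma impl_impl p y : p ≤ y -> (y ⇒ p) ⇒ p = y.
Proof. unfold mv_le, mv_impl. intros H. rewrite mv_luk, H, neg_one. apply oplus_0l. Qed.

Lemma impl_le_swap p x y : p ≤ x -> x ⇒ p ≤ y -> y ⇒ p ≤ x.
Proof. intros Hx H. rewrite <- (impl_impl Hx). apply impl_anti_l, H. Qed.

Section Linear.
Hypothesis Hlin : linearly_ordered A.

Lemma not_lt_le x y : ~ mv_lt A x y -> y ≤ x.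
Proof.
  intros Hn. destruct (Hlin y x) as [H | H]; auto.
  destruct (classic (x = y)) as [<- | Hne].
  - apply le_refl.
  - exfalso. apply Hn. split; assumption.
Qed.

Lemma Fsub_open_up (q a z : A) : Fsub A (open_up A q) a z <-> z ⇒ a ≤ q.
Proof.
  unfold Fsub, open_up. split.
  - apply not_lt_le.
  - intros H [Hle Hne]. apply Hne, le_antisym; assumption.
Qed.

(* The intersection over all a ≤ p reduces to its member at a = p. *)
Lemma sqimpl_open_up (q p z : A) :
  sqimpl A (open_up A q) (open_up A p) z <-> z ⇒ p ≤ q.
Proof.
  unfold sqimpl. split.
  - intros H. apply Fsub_open_up, H. intros [_ Hne]. apply Hne. reflexivity.
  - intros H a Ha. apply Fsub_open_up.
    apply le_trans with (z ⇒ p); [apply impl_mono_r, not_lt_le, Ha | exact H].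
Qed.

Lemma impl_le_iff (p q z : A) : p ≤ q -> q <> I -> (z ⇒ p ≤ q <-> q ⇒ p ≤ z).
Proof.
  intros Hpq Hq1. split.
  - intros H. apply impl_le_swap; [| exact H].
    destruct (Hlin p z) as [Hpz | Hzp]; [exact Hpz |].
    exfalso. apply Hq1, le_antisym; [apply le_one |].
    unfold mv_le in Hzp. rewrite <- Hzp. exact H.
  - intros H. apply impl_le_swap; [exact Hpq | exact H].
Qed.

End Linear.
End MVOrder.

Theorem mainTheorem14 (A : MVAlgebra) (p q : A) :
  linearly_ordered A -> non_discrete A ->
  @mv_lt A (mv_zero A) p -> @mv_lt A p q -> @mv_lt A q (@mv_one A) ->
  forall x : A, @sqimpl A (@open_up A q) (@open_up A p) x <-> @closed_up A (@mv_impl A q p) x.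
Proof.
  intros Hlin _ _ [Hpq _] [_ Hq1] x.
  unfold closed_up.
  rewrite (sqimpl_open_up Hlin).
  exact (impl_le_iff Hlin x Hpq Hq1).
Qed.
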